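(* Let $\Gamma$ be a trivalent graph. The semigroup $BZ_\Gamma(SL_2(\mathbb{C}))$ is generated by those weightings $w:E(\Gamma)\to\mathbb{Z}_{\ge0}$ in it with $w(e)\le2$ for all $e\in E(\Gamma)$.
   Context: $BZ_\Gamma(SL_2(\mathbb{C}))$ is the additive semigroup of weightings $w:E(\Gamma)\to\mathbb{Z}_{\ge0}$ such that at every vertex $v$, with incident edges $e,f,g$ (counted with multiplicity), one has $|w(e)-w(f)|\le w(g)\le w(e)+w(f)$ and $w(e)+w(f)+w(g)\in2\mathbb{Z}$. *)

From mathcomp Require Import all_boot.
Set Implicit Arguments. Unset Strict Implicit. Unset Printing Implicit Defensive.

(* A trivalent graph (loops and multiple edges allowed): finite vertex type V,
   finite edge type E, and for each vertex v the 3-tuple of edges incident to v,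
   counted with multiplicity (a loop at v occurs twice in [inc v]). *)
Record trivalent_graph := TrivalentGraph {
  tg_V : finType;
  tg_E : finType;
  tg_inc : tg_V -> 3.-tuple tg_E;
  tg_ends : forall e : tg_E, \sum_(v : tg_V) count_mem e (tg_inc v) = 2
}.

Definition bz_vertex (a b c : nat) : bool :=
  [&& a - b <= c, b - a <= c, c <= a + b & ~~ odd (a + b + c)].

Definition BZ (G : trivalent_graph) (w : tg_E G -> nat) : bool :=
  [forall v : tg_V G,
     bz_vertex (w (tnth (tg_inc v) ord0))
               (w (tnth (tg_inc v) (inord 1)))
               (w (tnth (tg_inc v) (inord 2)))].

From mathcomp Require Import all_boot zify.
Set Implicit Arguments. Unset Strict Implicit. Unset Printing Implicit Defensive.

(* A BZ weighting is a multicurve: at a vertex with incident weights a, b, c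
   there are (a + b - c)/2 strands joining the first two edges, and so on, and
   gluing strand ends edge by edge yields closed curves.  Following one curve
   gives a closed walk whose corner usage at each vertex is bounded by the
   strand counts, so its edge-count weighting u and w - u are both BZ.  A walk
   crossing some edge more than twice passes twice through the same half-edge
   and splits there into two shorter closed walks; a shortest one crosses
   every edge at most twice. *)

Lemma ordS3K (i : 'I_3) : ordS (ordS (ordS i)) = i.
Proof. by case: i => -[|[|[|//]]] ?; apply: val_inj. Qed.

Lemma ordS3_neq (i : 'I_3) : ordS i != i.
Proof. by case: i => -[|[|[|//]]]. Qed.

Lemma ordSS3_neq (i : 'I_3) : ordS (ordS i) != i.
Proof. by case: i => -[|[|[|//]]]. Qed.

Lemma ord3E (i : 'I_3) : [\/ i = ord0, i = ordS ord0 | i = ordS (ordS ord0)].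
Proof. by case: i => -[|[|[|//]]] ?; [apply: Or31 | apply: Or32 | apply: Or33]; apply: val_inj. Qed.

Lemma ord3_third (i j k l : 'I_3) :
  i != j -> k != i -> k != j -> l != i -> l != j -> k = l.
Proof.
by case: i j k l => -[|[|[|//]]] ? [[|[|[|//]]] ?] [[|[|[|//]]] ?] [[|[|[|//]]] ?] //=;
  move=> *; apply: val_inj.
Qed.

Lemma bz_vertex_rot a b c : bz_vertex a b c -> bz_vertex b c a.
Proof. by case/and4P=> *; apply/and4P; split; lia. Qed.

Lemma bz_vertex_split a b c : bz_vertex a b c -> a = (c + a - b)./2 + (a + b - c)./2.
Proof. by case/and4P=> *; lia. Qed.

(* A vertex whose half-edges carry [a i] strand ends and which has [x k]
   strands avoiding half-edge [k], i.e. joining half-edges [k+1] and [k+2].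
   On half-edge [i] the [x (i+1)] strands of type [i+1] come first, then
   those of type [i+2]: end [j] of half-edge [i] lies on the strand
   [strand_of (i, j)] = (type, number), whose other end is [partner (i, j)]. *)
Section StrandMatching.
Variables (x a : 'I_3 -> nat).
Hypothesis a_strands : forall i, a i = x (ordS i) + x (ordS (ordS i)).

Definition strand_of (p : 'I_3 * nat) : 'I_3 * nat :=
  if p.2 < x (ordS p.1) then (ordS p.1, p.2) else (ordS (ordS p.1), p.2 - x (ordS p.1)).

Definition partner (p : 'I_3 * nat) : 'I_3 * nat :=
  if p.2 < x (ordS p.1) then (ordS (ordS p.1), x p.1 + p.2)
  else (ordS p.1, p.2 - x (ordS p.1)).

Lemma partner_lt p : p.2 < a p.1 -> (partner p).2 < a (partner p).1.
Proof. by case: p => i j; rewrite /partner /=; case: ifP; rewrite /= !a_strands ?ordS3K; lia. Qed.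

Lemma partner_neq p : (partner p).1 != p.1.
Proof. by rewrite /partner; case: ifP => _; rewrite ?ordS3_neq ?ordSS3_neq. Qed.

Lemma partnerK p : p.2 < a p.1 -> partner (partner p) = p.
Proof.
case: p => i j; rewrite a_strands /partner /= => lt_j.
have [lt_jx|le_xj] := ltnP j (x (ordS i)); rewrite /= ?ordS3K.
  by rewrite ltnNge leq_addr /= addKn.
by rewrite ifT ?subnKC //; lia.
Qed.

Lemma strand_of_partner p : p.2 < a p.1 -> strand_of (partner p) = strand_of p.
Proof.
case: p => i j; rewrite a_strands /strand_of /partner /= => lt_j.
have [lt_jx|le_xj] := ltnP j (x (ordS i)); rewrite /= ?ordS3K.
  by rewrite ltnNge leq_addr /= addKn.
by rewrite ifT //; lia.
Qed.

Lemma strand_of_neq p : (strand_of p).1 != p.1.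
Proof. by rewrite /strand_of; case: ifP => _; rewrite ?ordS3_neq ?ordSS3_neq. Qed.

Lemma strand_of_lt p : p.2 < a p.1 -> (strand_of p).2 < x (strand_of p).1.
Proof. by case: p => i j; rewrite a_strands /strand_of /=; case: ifP => /=; lia. Qed.

Lemma strand_of_inj p q : p.1 = q.1 -> strand_of p = strand_of q -> p = q.
Proof.
case: p q => i j [_ l] /= <-; rewrite /strand_of /=.
have ne := ordS3_neq (ordS i).
have [lt_j|le_j] := ltnP j (x (ordS i)); have [lt_l|le_l] := ltnP l (x (ordS i));
  move=> /[dup] /(congr1 fst) /= /eqP e1 /(congr1 snd) /= e2.
- by rewrite e2.
- by rewrite eq_sym (negbTE ne) in e1.
- by rewrite (negbTE ne) in e1.
- by congr pair; lia.
Qed.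

End StrandMatching.

Lemma count_add_eq (T : eqType) (a b c d : pred T) (s : seq T) :
  {in s, forall x, a x + b x = c x + d x} -> count a s + count b s = count c s + count d s.
Proof.
elim: s => //= x s IH abcd; have := abcd x (mem_head x s).
have := IH (fun y sy => abcd y (mem_behead (s := x :: s) sy)); lia.
Qed.

Lemma count_leq_inj (T U : eqType) (P : pred T) (l : T -> U) (s : seq T) (r : seq U) :
  uniq s -> {in s &, forall x y, P x -> P y -> l x = l y -> x = y} ->
  {in s, forall x, P x -> l x \in r} -> count P s <= size r.
Proof.
move=> uniq_s l_inj l_r; rewrite -size_filter -(size_map l).
apply: uniq_leq_size => [|z /mapP[x]]; last by rewrite mem_filter => /andP[Px sx] ->; apply: l_r.
rewrite map_inj_in_uniq ?filter_uniq // => x y.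
by rewrite !mem_filter => /andP[Px sx] /andP[Py sy]; apply: l_inj.
Qed.

Lemma drop_zip (S T : Type) n (s : seq S) (t : seq T) :
  drop n (zip s t) = zip (drop n s) (drop n t).
Proof. by elim: s t n => [|x s IH] [|y t] [|n] //=; case: drop. Qed.

Lemma take_zip (S T : Type) n (s : seq S) (t : seq T) :
  take n (zip s t) = zip (take n s) (take n t).
Proof. by elim: s t n => [|x s IH] [|y t] [|n] //=; rewrite IH. Qed.

Lemma rot_zip (S T : Type) n (s : seq S) (t : seq T) :
  size s = size t -> rot n (zip s t) = zip (rot n s) (rot n t).
Proof. by move=> eq_st; rewrite /rot zip_cat ?drop_zip ?take_zip // !size_drop eq_st. Qed.

Lemma rot1_orbit (T : finType) (f : T -> T) x :
  injective f -> rot 1 (orbit f x) = map f (orbit f x).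
Proof.
move=> f_inj; have map_traject n y : map f (traject f y n) = traject f (f y) n.
  by elim: n y => //= n IH y; rewrite IH.
rewrite /orbit map_traject; move: (order_gt0 f x) (iter_order f_inj x).
case: (order f x) => // k _ fkx.
by rewrite [in LHS]trajectS rot1_cons trajectSr -[iter k f (f x)]iterSr fkx.
Qed.

Section InvolutionPair.
Variables (T : finType) (sigma tau : T -> T) (P : pred T).
Hypotheses (sigmaK : involutive sigma) (tauK : involutive tau).
Hypotheses (sigma_neq : forall x, sigma x != x) (tau_neq : forall x, P x -> tau x != x).
Hypotheses (P_sigma : forall x, P (sigma x) = P x) (P_tau : forall x, P x -> P (tau x)).

Lemma comp_involutive_inj : injective (tau \o sigma).
Proof. exact: inj_comp (inv_inj tauK) (inv_inj sigmaK). Qed.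

Lemma pred_iter_comp n x : P x -> P (iter n (tau \o sigma) x).
Proof. by move=> Px; elim: n => //= n IH; apply: P_tau; rewrite P_sigma. Qed.

(* In the dihedral group generated by sigma and tau, reaching [sigma x] from
   [x] would force sigma or tau to fix the midpoint of the path. *)
Lemma iter_comp_involutive_neq n x : P x -> iter n (tau \o sigma) x != sigma x.
Proof.
move=> Px; apply/eqP => fnx; set f := tau \o sigma; set g := sigma \o tau.
have sigma_iter m y : sigma (iter m f y) = iter m g (sigma y) by elim: m => //= m <-.
have iterK m y : iter m g (iter m f y) = y.
  by elim: m => // m IH; rewrite iterSr iterS /g /f /= tauK sigmaK.
set m := n./2; have := odd_double_half n; rewrite -addnn.
have sigma_mid k : n = m + k -> sigma (iter m f x) = iter k f x.
  by move=> en; rewrite sigma_iter -fnx en iterD iterK.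
case: (odd n) => /= en.
- have Py : P (sigma (iter m f x)) by rewrite P_sigma pred_iter_comp.
  have /eqP[] := tau_neq Py.
  by rewrite [RHS](sigma_mid m.+1) ?iterS //; lia.
- have /eqP[] := sigma_neq (iter m f x).
  by rewrite [LHS](sigma_mid m) //; lia.
Qed.

End InvolutionPair.

Section Graph.
Variable G : trivalent_graph.
Notation V := (tg_V G).
Notation E := (tg_E G).

Definition half_edge := (V * 'I_3)%type.
Definition edge_of (h : half_edge) : E := tnth (tg_inc h.1) h.2.

Lemma card_edge_fiber e : \sum_(h : half_edge) (edge_of h == e) = 2.
Proof.
rewrite -[RHS](tg_ends e).
transitivity (\sum_(v : V) \sum_(i : 'I_3) ((edge_of (v, i) == e) : nat)).
  by rewrite pair_bigA; apply: eq_bigr => -[v i].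
apply: eq_bigr => v _.
rewrite -(map_tnth_enum (tg_inc v)) count_map -sum1_count big_mkcond /=.
by rewrite [RHS]big_mkcond big_enum; apply: eq_bigr => i _ /=; case: eqP.
Qed.

Definition mate (h : half_edge) : half_edge :=
  odflt h [pick h' | (h' != h) && (edge_of h' == edge_of h)].

Lemma mate_spec h : (mate h != h) && (edge_of (mate h) == edge_of h).
Proof.
rewrite /mate; case: pickP => [//|none].
have := card_edge_fiber (edge_of h); rewrite (bigD1 h) //= eqxx big1 // => h' ne_h'h.
by have := none h'; rewrite ne_h'h /= => ->.
Qed.

Lemma mate_neq h : mate h != h.
Proof. by case/andP: (mate_spec h). Qed.

Lemma edge_of_mate h : edge_of (mate h) = edge_of h.
Proof. by case/andP: (mate_spec h) => _ /eqP. Qed.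

Lemma same_edge h h' : edge_of h' = edge_of h -> h' = h \/ h' = mate h.
Proof.
move=> e_h'; have [->|ne_h'h] := eqVneq h' h; first by left.
have [->|ne_h'm] := eqVneq h' (mate h); first by right.
have := card_edge_fiber (edge_of h).
rewrite (bigD1 h) //= eqxx (bigD1 (mate h)) /= ?mate_neq // edge_of_mate eqxx.
by rewrite (bigD1 h') /= ?ne_h'h ?ne_h'm // e_h' eqxx.
Qed.

Lemma mateK : involutive mate.
Proof.
move=> h; have e : edge_of (mate (mate h)) = edge_of h by rewrite !edge_of_mate.
by case: (same_edge e) => // /eqP; rewrite (negbTE (mate_neq _)).
Qed.

Lemma edge_of_surj e : exists h, edge_of h = e.
Proof.
case: (pickP (fun h => edge_of h == e)) => [h /eqP <-|none]; first by exists h.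
by have := card_edge_fiber e; rewrite big1 // => h _; rewrite none.
Qed.

(* The number of strands at [v] avoiding its [k]-th half-edge. *)
Definition strands (w : E -> nat) (v : V) (k : 'I_3) : nat :=
  (w (edge_of (v, ordS k)) + w (edge_of (v, ordS (ordS k))) - w (edge_of (v, k)))./2.

Lemma BZE w : BZ w = [forall v, bz_vertex (w (edge_of (v, ord0)))
  (w (edge_of (v, ordS ord0))) (w (edge_of (v, ordS (ordS ord0))))].
Proof.
rewrite /BZ; suff [-> ->] : inord 1 = ordS ord0 :> 'I_3 /\ inord 2 = ordS (ordS ord0) :> 'I_3 by [].
by split; apply: val_inj; rewrite /= inordK.
Qed.

Lemma BZ_strands w v i : BZ w ->
  w (edge_of (v, i)) = strands w v (ordS i) + strands w v (ordS (ordS i)).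
Proof.
rewrite BZE => /forallP /(_ v) bz; rewrite /strands; have bz' := bz_vertex_rot bz.
by case: (ord3E i) => ->; rewrite ?ordS3K;
  [apply: bz_vertex_split bz | apply: bz_vertex_split bz' | apply: bz_vertex_split (bz_vertex_rot bz')].
Qed.

Lemma BZ_of_strands u (y : V -> 'I_3 -> nat) :
  (forall v i, u (edge_of (v, i)) = y v (ordS i) + y v (ordS (ordS i))) -> BZ u.
Proof.
move=> u_y; rewrite BZE; apply/forallP => v.
by rewrite !u_y ?ordS3K; apply/and4P; split; lia.
Qed.

(* A closed walk is the cyclic list of the half-edges by which it leaves
   vertices; it enters the next vertex through the mate. *)
Definition transitions (W : seq half_edge) := zip W (rot 1 W).

Definition turn (p : half_edge * half_edge) :=
  ((mate p.1).1 == p.2.1) && ((mate p.1).2 != p.2.2).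

Definition corner (v : V) (k : 'I_3) (p : half_edge * half_edge) :=
  [&& (mate p.1).1 == v, p.2.1 == v, (mate p.1).2 != k & p.2.2 != k].

Definition walk_weight (W : seq half_edge) (e : E) := count (fun h => edge_of h == e) W.

Definition corner_count W v k := count (corner v k) (transitions W).

Lemma turn_ends v i p : turn p ->
  (p.2 == (v, i)) + (mate p.1 == (v, i)) = corner v (ordS i) p + corner v (ordS (ordS i)) p.
Proof.
case: p => h [u j]; rewrite /turn /corner /=; case: (mate h) => u' j' /= /andP[/eqP <- ne_j'j].
rewrite !xpair_eqE; case: (u' == v) => //=.
by case: (ord3E i) (ord3E j) (ord3E j') ne_j'j => -> [] -> [] ->.
Qed.

Lemma edge_of_eq h h' : (edge_of h' == edge_of h) = (h' == h) + (h' == mate h) :> nat.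
Proof.
have [->|ne_h'h] := eqVneq h' h; first by rewrite eqxx eq_sym (negbTE (mate_neq h)).
have [->|ne_h'm] := eqVneq h' (mate h); first by rewrite edge_of_mate eqxx.
by case: (edge_of h' =P edge_of h) => // /same_edge[] e; rewrite e eqxx in ne_h'h ne_h'm.
Qed.

Lemma walk_weight_edge W h : walk_weight W (edge_of h) = count_mem h W + count_mem (mate h) W.
Proof. by elim: W => //= h' W ->; rewrite edge_of_eq; lia. Qed.

Lemma count_mem_transitions W h : count_mem h W = count (fun p => p.2 == h) (transitions W).
Proof.
rewrite /transitions -(count_map snd (pred1 h)) -/(unzip2 _) unzip2_zip ?size_rot //.
by apply/permP; rewrite perm_sym perm_rot perm_refl.
Qed.

Lemma count_mem_mate_transitions W h :
  count_mem (mate h) W = count (fun p => mate p.1 == h) (transitions W).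
Proof.
rewrite /transitions -(count_map fst (fun h' => mate h' == h)) -/(unzip1 _) unzip1_zip ?size_rot //.
by apply: eq_count => h' /=; apply/eqP/eqP => [->|<-]; rewrite mateK.
Qed.

Lemma walk_weight_corners W v i : all turn (transitions W) ->
  walk_weight W (edge_of (v, i)) = corner_count W v (ordS i) + corner_count W v (ordS (ordS i)).
Proof.
move=> turns; rewrite walk_weight_edge count_mem_transitions count_mem_mate_transitions.
by apply: count_add_eq => p /(allP turns); apply: turn_ends.
Qed.

Lemma transitions_rot n W : transitions (rot n W) = rot n (transitions W).
Proof. by rewrite /transitions rot_rot rot_zip ?size_rot. Qed.

(* A closed walk through [h] twice splits at [h] into two closed walks. *)
Lemma transitions_cat h A B :
  transitions (h :: A ++ h :: B) = transitions (h :: A) ++ transitions (h :: B).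
Proof.
rewrite /transitions !rot1_cons -zip_cat ?size_rcons //.
by rewrite rcons_cat cat_rcons.
Qed.

Section Weighting.
Variable w : E -> nat.

Definition admissible_walk W := [/\ W != [::], all turn (transitions W) &
  forall v k, corner_count W v k <= strands w v k].

Lemma admissible_walk_BZ W : BZ w -> admissible_walk W ->
  [/\ BZ (walk_weight W), BZ (fun e => w e - walk_weight W e) & forall e, walk_weight W e <= w e].
Proof.
move=> bz [_ turns le_cs]; have ww := walk_weight_corners _ _ turns.
split.
- exact: (BZ_of_strands (y := corner_count W)).
- apply: (BZ_of_strands (y := fun v k => strands w v k - corner_count W v k)) => v i.
  by rewrite ww (BZ_strands _ _ bz); have := le_cs v (ordS i); have := le_cs v (ordS (ordS i)); lia.
- move=> e; case: (edge_of_surj e) => -[v i] <-.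
  by rewrite ww (BZ_strands _ _ bz) leq_add.
Qed.

Lemma admissible_walk_sub W W' r : W' != [::] ->
  perm_eq (transitions W) (transitions W' ++ r) -> admissible_walk W -> admissible_walk W'.
Proof.
move=> nW' pe [_ turns le_cs]; split => //.
  by move: turns; rewrite (perm_all _ pe) all_cat => /andP[].
move=> v k; apply: leq_trans (le_cs v k).
by rewrite /corner_count (permP pe) count_cat leq_addr.
Qed.

Lemma admissible_walk_shorten W : admissible_walk W -> (exists e, 2 < walk_weight W e) ->
  exists W', admissible_walk W' /\ size W' < size W.
Proof.
move=> aW [e lt2e]; case: (edge_of_surj e) => h eh.
rewrite -eh walk_weight_edge in lt2e.
have [x lt1x] : exists x, 1 < count_mem x W.
  by case: (leqP 2 (count_mem h W)) => ?; [exists h | exists (mate h)]; lia.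
have xW : x \in W by rewrite -has_pred1 has_count; lia.
case: (rot_to xW) => n W1 eW.
have : x \in W1.
  have cnt : count_mem x (rot n W) = count_mem x W by apply/permP; rewrite perm_rot perm_refl.
  by rewrite -has_pred1 has_count; move: lt1x; rewrite -cnt eW /= eqxx add1n ltnS.
move=> /splitPr xW1; case: xW1 eW => A B eW; exists (x :: A); split.
  apply: (admissible_walk_sub (r := transitions (x :: B))) aW => //.
  by rewrite -transitions_cat -eW transitions_rot perm_sym perm_rot perm_refl.
by have := congr1 size eW; rewrite size_rot /= size_cat /=; lia.
Qed.

Lemma admissible_walk_small W : admissible_walk W ->
  exists W', admissible_walk W' /\ forall e, walk_weight W' e <= 2.
Proof.
have [n] := ubnP (size W); elim: n W => // n IH W ltWn aW.
have [/existsP big|/existsPn small] := boolP [exists e, 2 < walk_weight W e].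
  by case: (admissible_walk_shorten aW big) => W' [aW' ltW'W]; apply: (IH W') => //; lia.
by exists W; split => // e; rewrite leqNgt small.
Qed.

Section Strands.
Hypothesis bz : BZ w.

(* Slot [(h, j)] is the [j]-th strand end on half-edge [h], meaningful when
   [j < w (edge_of h)]; indices are bounded only to get a finite type, and
   [partner_slot] is the identity on meaningless slots. *)
Definition slot_bound := \max_(e : E) w e.
Definition slot := (half_edge * 'I_slot_bound.+1)%type.
Definition slot_ok (s : slot) := val s.2 < w (edge_of s.1).
Definition slot_pos (s : slot) : 'I_3 * nat := (s.1.2, val s.2).
Definition mate_slot (s : slot) : slot := (mate s.1, s.2).

Definition partner_slot (s : slot) : slot :=
  if slot_ok s then
    let p := partner (strands w s.1.1) (slot_pos s) in ((s.1.1, p.1), inord p.2)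
  else s.

Definition strand (s : slot) := strand_of (strands w s.1.1) (slot_pos s).

Lemma slot_ok_mate s : slot_ok (mate_slot s) = slot_ok s.
Proof. by rewrite /slot_ok /= edge_of_mate. Qed.

Lemma mate_slotK : involutive mate_slot.
Proof. by case=> h j; rewrite /mate_slot /= mateK. Qed.

Lemma mate_slot_neq s : mate_slot s != s.
Proof. by case: s => h j; rewrite /mate_slot xpair_eqE (negbTE (mate_neq h)). Qed.

Let strands_at v := BZ_strands v ^~ bz.

Lemma partner_slot_spec s : slot_ok s ->
  [/\ slot_ok (partner_slot s), (partner_slot s).1.1 = s.1.1 &
      slot_pos (partner_slot s) = partner (strands w s.1.1) (slot_pos s)].
Proof.
case: s => -[v i] j ok_s; rewrite /partner_slot ok_s /=.
have := partner_lt (strands_at v) (p := (i, val j)) ok_s; case: partner => i' j' /= ok'.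
have lt_j' : j' < slot_bound.+1 by rewrite ltnS (leq_trans (ltnW ok')) ?leq_bigmax.
by rewrite /slot_ok /slot_pos /= inordK.
Qed.

Lemma partner_slot_ok s : slot_ok s -> slot_ok (partner_slot s).
Proof. by case/partner_slot_spec. Qed.

Lemma partner_slotK : involutive partner_slot.
Proof.
move=> s; have [ok_s|nok_s] := boolP (slot_ok s); last by rewrite /partner_slot !(negbTE nok_s).
case: (partner_slot_spec ok_s) => ok' ev ep.
rewrite {1}/partner_slot ok' ev ep (partnerK (strands_at _)) //.
by case: s ok_s {ok' ev ep} => -[v i] j _; rewrite /= inord_val.
Qed.

Lemma partner_slot_neq s : slot_ok s -> (partner_slot s).1.2 != s.1.2.
Proof. by case/partner_slot_spec => _ _ /(congr1 fst) /= ->; apply: partner_neq. Qed.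

Lemma strand_partner_slot s : slot_ok s -> strand (partner_slot s) = strand s.
Proof.
move=> ok_s; case: (partner_slot_spec ok_s) => _ ev ep.
by rewrite /strand ev ep (strand_of_partner (strands_at _)).
Qed.

Lemma strand_neq s : (strand s).1 != s.1.2.
Proof. exact: strand_of_neq. Qed.

Lemma strand_lt s : slot_ok s -> (strand s).2 < strands w s.1.1 (strand s).1.
Proof. exact: strand_of_lt (strands_at s.1.1) (slot_pos s). Qed.

Lemma same_strand s t : slot_ok s -> s.1.1 = t.1.1 -> strand s = strand t ->
  t = s \/ t = partner_slot s.
Proof.
have same_half_edge u u' : u.1 = u'.1 -> strand u = strand u' -> u' = u.
  case: u u' => h j [_ j'] /= <- st.
  by case: (@strand_of_inj _ (slot_pos (h, j)) (slot_pos (h, j')) erefl st) => /val_inj ->.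
case: s t => -[v i] j [[_ i'] j'] ok_s /= <- st.
have [ei|ne_i'i] := eqVneq i' i.
  by left; rewrite ei in st *; apply: same_half_edge st.
right; apply: same_half_edge (esym _) _; last by rewrite strand_partner_slot.
set k := (strand ((v, i), j)).1.
have ne_ik : i != k by rewrite eq_sym strand_neq.
have ne_i'k : i' != k by rewrite /k st eq_sym strand_neq.
have ne_pk : (partner_slot ((v, i), j)).1.2 != k.
  by rewrite /k -strand_partner_slot // eq_sym strand_neq.
rewrite [(partner_slot _).1]surjective_pairing; case: (partner_slot_spec ok_s) => _ /= -> _.
by congr pair; apply: ord3_third ne_ik ne_i'i ne_i'k (partner_slot_neq ok_s) ne_pk.
Qed.

Definition strand_step := partner_slot \o mate_slot.

Lemma partner_slot_fixfree s : slot_ok s -> partner_slot s != s.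
Proof. by move=> ok_s; apply: contraNneq (partner_slot_neq ok_s) => ->. Qed.

Lemma strand_step_inj : injective strand_step.
Proof. exact: comp_involutive_inj mate_slotK partner_slotK. Qed.

Lemma iter_strand_step_neq n s : slot_ok s -> iter n strand_step s != mate_slot s.
Proof.
exact: (@iter_comp_involutive_neq _ _ _ slot_ok mate_slotK partner_slotK mate_slot_neq
  partner_slot_fixfree slot_ok_mate partner_slot_ok n).
Qed.

Lemma orbit_ok s0 s : slot_ok s0 -> s \in orbit strand_step s0 -> slot_ok s.
Proof.
move=> ok_s0; rewrite -fconnect_orbit => /iter_findex <-.
exact: (@pred_iter_comp _ _ _ slot_ok slot_ok_mate partner_slot_ok _ _ ok_s0).
Qed.

Lemma corner_strand x v k : slot_ok x -> corner v k (x.1, (strand_step x).1) ->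
  (mate_slot x).1.1 = v /\ (strand (mate_slot x)).1 = k.
Proof.
rewrite -slot_ok_mate; set s := mate_slot x => ok_s.
case: (partner_slot_spec ok_s) => _ ev _.
rewrite /corner /= -/s -ev => /and4P[/eqP -> _ ne_sk ne_pk]; split => //.
have ne_ps := partner_slot_neq ok_s.
have ne_ts := strand_neq s; have := strand_neq (partner_slot s).
rewrite strand_partner_slot // => ne_tp.
by apply: ord3_third ne_ts ne_tp _ _; rewrite eq_sym.
Qed.

Lemma corner_count_orbit s0 v k : slot_ok s0 ->
  count (fun s => corner v k (s.1, (strand_step s).1)) (orbit strand_step s0) <= strands w v k.
Proof.
move=> ok_s0; have O_ok := orbit_ok ok_s0.
rewrite -[strands w v k](size_iota 0).
apply: (count_leq_inj (l := fun s => (strand (mate_slot s)).2)); first exact: orbit_uniq.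
  move=> x y xO yO /(corner_strand (O_ok x xO)) [vx kx] /(corner_strand (O_ok y yO)) [vy ky] e.
  have: strand (mate_slot x) = strand (mate_slot y).
    by rewrite [LHS]surjective_pairing [RHS]surjective_pairing kx ky e.
  case/same_strand; rewrite ?slot_ok_mate ?O_ok ?vx ?vy //.
    by move/(inv_inj mate_slotK).
  move=> e_xy; have cyx : fconnect strand_step y (strand_step x).
    rewrite -!fconnect_orbit in xO yO.
    apply: connect_trans (fconnect1 _ x); apply: connect_trans xO.
    by rewrite (fconnect_sym strand_step_inj).
  have := iter_strand_step_neq (findex strand_step y (strand_step x)) (O_ok y yO).
  by rewrite iter_findex // e_xy eqxx.
move=> x xO /(corner_strand (O_ok x xO)) [vx kx]; rewrite mem_iota /= -vx -kx.
by apply: strand_lt; rewrite slot_ok_mate O_ok.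
Qed.

Lemma admissible_walk_orbit s0 : slot_ok s0 -> admissible_walk (map fst (orbit strand_step s0)).
Proof.
move=> ok_s0; have O_ok := orbit_ok ok_s0.
have trO : transitions (map fst (orbit strand_step s0)) =
    map (fun s => (s.1, (strand_step s).1)) (orbit strand_step s0).
  by rewrite /transitions -map_rot (rot1_orbit _ strand_step_inj) -map_comp zip_map.
split.
- by rewrite -size_eq0 size_map size_orbit -lt0n order_gt0.
- rewrite trO all_map; apply/allP => x xO /=.
  have ok_s : slot_ok (mate_slot x) by rewrite slot_ok_mate O_ok.
  case: (partner_slot_spec ok_s) => _ ev _.
  by rewrite /turn /= ev eqxx eq_sym partner_slot_neq.
- by move=> v k; rewrite /corner_count trO count_map; apply: corner_count_orbit.
Qed.

End Strands.

Lemma exists_admissible_walk e : BZ w -> 0 < w e -> exists W, admissible_walk W.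
Proof.
move=> bz lt0e; case: (edge_of_surj e) => h eh.
have ok : slot_ok ((h, inord 0) : slot) by rewrite /slot_ok /= inordK // eh.
by exists (map fst (orbit strand_step (h, inord 0))); apply: admissible_walk_orbit.
Qed.

End Weighting.

End Graph.

Lemma BZ_decompose_step (G : trivalent_graph) (w : tg_E G -> nat) :
  BZ w -> (exists e, 0 < w e) ->
  exists u : tg_E G -> nat, [/\ BZ u && [forall e, u e <= 2],
    BZ (fun e => w e - u e), forall e, u e <= w e & exists e, 0 < u e].
Proof.
move=> bz [e lt0e]; case: (exists_admissible_walk bz lt0e) => W aW.
case: (admissible_walk_small aW) => W' [aW' small].
case: (admissible_walk_BZ bz aW') => bz_u bz_wu le_uw.
exists (walk_weight W'); split => //; first by rewrite bz_u; apply/forallP.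
case: aW' => + _ _; case: W' {small bz_u bz_wu le_uw} => // h W' _.
by exists (edge_of h); rewrite /walk_weight /= eqxx.
Qed.

Theorem mainTheorem14 (G : trivalent_graph) (w : tg_E G -> nat) :
  BZ w ->
  exists s : seq (tg_E G -> nat),
    all (fun u => BZ u && [forall e, u e <= 2]) s /\
    (forall e, w e = \sum_(u <- s) u e).
Proof.
have [n] := ubnP (\sum_e w e); elim: n w => // n IH w lt_wn bz.
have [/existsP pos|/existsPn zero] := boolP [exists e, 0 < w e]; last first.
  by exists [::]; split => // e; rewrite big_nil; apply/eqP; rewrite -leqn0 leqNgt zero.
case: (BZ_decompose_step bz pos) => u [small_u bz_wu le_uw [e lt0u]].
have [|s [small_s sum_s]] := IH (fun e => w e - u e) _ bz_wu.
  have : u e <= \sum_e u e by rewrite (bigD1 e) //= leq_addr.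
  have : \sum_e w e = \sum_e (w e - u e) + \sum_e u e.
    by rewrite -big_split; apply: eq_bigr => e' _ /=; rewrite subnK.
  lia.
exists (u :: s); split; first by rewrite /= small_u.
by move=> e'; rewrite big_cons -sum_s subnKC.
Qed.
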